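(* Let $X\subseteq\{0,1\}^{\mathbb Z}$ be a subshift and let $a_{-n+1}a_{-n+2}\dots a_{-1}a_0$ ($n\ge2$) be a block of length $n$ in $\mathcal L(\tilde X)$. If $a_{-n+1}a_{-n+2}\dots a_0$ is significant, then both $0a_{-n+2}\dots a_{-1}a_0$ and $1a_{-n+2}\dots a_{-1}a_0$ are in $\mathcal L(\tilde X)$.
   Context: $\sigma$ is the shift $(\sigma x)_i=x_{i+1}$; a subshift is a nonempty closed $\sigma$-invariant set. $X^+$ denotes the set of right rays $x_0x_1\dots$ of points $x\in X$, and $\tilde X=\{x\in\{0,1\}^{\mathbb Z}: x_px_{p+1}\dots\in X^+\ \forall p\in\mathbb Z\}$ (which equals $X$). $\mathcal L(\tilde X)$ is the set of finite blocks occurring in points of $\tilde X$. For $a_{-n}\dots a_0\in\mathcal L(\tilde X)$, $\mathrm{fol}(a_{-n}\dots a_0)=\{b_0b_1\dots\in X^+:\exists b\in\tilde X,\ b_{-n}\dots b_0=a_{-n}\dots a_0\}$. A block $a_{-n}\dots a_0$ with $n\ge1$ is significant if $\mathrm{fol}(a_{-n}\dots a_0)\subsetneq\mathrm{fol}(a_{-n+1}\dots a_0)$. *)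

From Stdlib Require Import ZArith List.
Open Scope Z_scope.

Definition point := Z -> bool.
Definition ray := nat -> bool.

Definition shift (x : point) : point := fun i => x (i + 1).

(* closed in the product topology: every point all of whose central
   windows [-N,N] are seen in X belongs to X *)
Definition closed_set (X : point -> Prop) : Prop :=
  forall x : point,
    (forall N : Z, exists y, X y /\ forall i, -N <= i <= N -> x i = y i) -> X x.

Definition shift_invariant (X : point -> Prop) : Prop :=
  (forall x, X x -> X (shift x)) /\
  (forall x, X x -> exists y, X y /\ forall i, shift y i = x i).

Definition subshift (X : point -> Prop) : Prop :=
  (exists x, X x) /\ closed_set X /\ shift_invariant X.

Definition rays (X : point -> Prop) (r : ray) : Prop :=
  exists x, X x /\ forall i : nat, r i = x (Z.of_nat i).

Definition tildeX (X : point -> Prop) (x : point) : Prop :=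
  forall p : Z, rays X (fun i : nat => x (p + Z.of_nat i)).

(* A block a_{-m+1} ... a_0 is a list w of length m; entry j of w is a_{j-(m-1)}.
   [ends_at0 b w] : b_{-m+1} ... b_0 = w. *)
Definition ends_at0 (b : point) (w : list bool) : Prop :=
  forall j : nat, (j < length w)%nat ->
    b (Z.of_nat j - Z.of_nat (length w - 1)) = nth j w false.

Definition in_lang (X : point -> Prop) (w : list bool) : Prop :=
  exists x p, tildeX X x /\
    forall j : nat, (j < length w)%nat -> x (p + Z.of_nat j) = nth j w false.

Definition fol (X : point -> Prop) (w : list bool) (r : ray) : Prop :=
  rays X r /\
  exists b, tildeX X b /\ ends_at0 b w /\ forall i : nat, r i = b (Z.of_nat i).

Definition strict_subset (A B : ray -> Prop) : Prop :=
  (forall r, A r -> B r) /\ exists r, B r /\ ~ A r.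

Definition significant (X : point -> Prop) (w : list bool) : Prop :=
  (2 <= length w)%nat /\ strict_subset (fol X w) (fol X (tl w)).

(* If a ray of fol(a_{-n+2}..a_0) is not in fol(a_{-n+1}..a_0), the point of
   tilde X witnessing it must carry the symbol opposite to a_{-n+1} at position
   -n+1; so the block with its first symbol flipped also occurs, while the
   original block occurs by hypothesis. *)
From Stdlib Require Import ZArith List Lia Bool.

Lemma ends_at0_cons (b : point) (a : bool) (t : list bool) :
  ends_at0 b (a :: t) <-> b (- Z.of_nat (length t)) = a /\ ends_at0 b t.
Proof.
  unfold ends_at0; simpl length; split.
  - intros Hend; split.
    + change a with (nth 0 (a :: t) false).
      rewrite <- (Hend 0%nat) by lia; f_equal; lia.
    + intros j Hj; change (nth j t false) with (nth (S j) (a :: t) false).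
      rewrite <- (Hend (S j)) by lia; f_equal; lia.
  - intros [Ha Ht] [|j] Hj; cbn [nth].
    + rewrite <- Ha; f_equal; lia.
    + rewrite <- (Ht j) by lia; f_equal; lia.
Qed.

Lemma in_lang_of_ends_at0 (X : point -> Prop) (b : point) (w : list bool) :
  tildeX X b -> ends_at0 b w -> in_lang X w.
Proof.
  intros Hb Hend; exists b, (- Z.of_nat (length w - 1)); split; [exact Hb|].
  intros j Hj; rewrite <- (Hend j Hj); f_equal; lia.
Qed.

Lemma in_lang_negb_cons_of_fol_gap (X : point -> Prop) (a : bool) (t : list bool) (r : ray) :
  fol X t r -> ~ fol X (a :: t) r -> in_lang X (negb a :: t).
Proof.
  intros [Hr [b [Hb [Hend Hrb]]]] Hnot.
  apply (in_lang_of_ends_at0 X b); [exact Hb|].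
  apply ends_at0_cons; split; [|exact Hend].
  destruct (bool_dec (b (- Z.of_nat (length t))) a) as [Ea|Ea].
  - exfalso; apply Hnot; split; [exact Hr|].
    exists b; split; [exact Hb|split; [|exact Hrb]].
    apply ends_at0_cons; split; assumption.
  - destruct a, (b (- Z.of_nat (length t))); simpl; congruence.
Qed.

Theorem proposition4p6 (X : point -> Prop) (w : list bool) :
  subshift X -> (2 <= length w)%nat -> in_lang X w -> significant X w ->
  in_lang X (false :: tl w) /\ in_lang X (true :: tl w).
Proof.
  intros _ Hlen Hw [_ [_ [r [Hr Hnot]]]].
  destruct w as [|a t]; [simpl in Hlen; lia|].
  pose proof (in_lang_negb_cons_of_fol_gap X a t r Hr Hnot) as Hflip.
  destruct a; split; assumption.
Qed.
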